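(* Let $f_1,f_2,\dots$ be real-valued measurable functions on a probability space $(\Omega,\mathcal F,\mathbb P)$ with tail $\sigma$-algebra $\mathcal T=\bigcap_n\sigma(f_n,f_{n+1},\dots)$. Suppose there are a subsequence $(f_{k_n})_n$ and real-valued $\mathcal T$-measurable $D_1,D_2,\dots$ such that, along $(f_{k_n})_n$ and along every further subsequence $(f_{m_n})_n$ of it, $\frac1N\sum_{n=1}^Nf_{m_n}-D_N\to0$ in $\mathbb P$-probability as $N\to\infty$. Then, passing to a further subsequence, $(f_{k_n})_n$ may be assumed bounded in probability, i.e. $\lim_{M\to\infty}\sup_n\mathbb P(|f_{k_n}|>M)=0$. *)

From HB Require Import structures.
From mathcomp Require Import all_boot all_order all_algebra.
From mathcomp Require Import all_classical all_reals all_analysis.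
Set Implicit Arguments. Unset Strict Implicit. Unset Printing Implicit Defensive.
Import Order.TTheory GRing.Theory Num.Theory.
Import numFieldNormedType.Exports.
Local Open Scope classical_set_scope.
Local Open Scope ring_scope.

Section tail.
Context d (T : measurableType d) (R : realType).

Definition tail_gen (f : nat -> T -> R) (n : nat) : set (set T) :=
  [set A | exists k, (n <= k)%N /\ exists B : set R, measurable B /\ A = f k @^-1` B].

Definition sigma_from (f : nat -> T -> R) (n : nat) : set (set T) :=
  <<s tail_gen f n >>.

Definition tail_sigma (f : nat -> T -> R) : set (set T) :=
  [set A | forall n, sigma_from f n A].

Definition tail_measurable (f : nat -> T -> R) (D : T -> R) : Prop :=
  forall B : set R, measurable B -> tail_sigma f (D @^-1` B).

Definition strict_incr (s : nat -> nat) : Prop := forall n, (s n < s n.+1)%N.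

End tail.

From HB Require Import structures.
From mathcomp Require Import all_boot all_order all_algebra.
From mathcomp Require Import all_classical all_reals all_analysis.
From mathcomp Require Import ring lra zify measurable_realfun.
Set Implicit Arguments. Unset Strict Implicit. Unset Printing Implicit Defensive.
Import Order.TTheory GRing.Theory Num.Theory.
Import numFieldNormedType.Exports.
Local Open Scope classical_set_scope.
Local Open Scope ring_scope.

(* No further subsequence is needed: g_n = f_(k_n) itself is bounded in
   probability. Otherwise there are e > 0 and a subsequence s with
   P(|g_(s_N)| > N) > e for every N. The averages of the first N terms along s
   and along the shifted subsequence (s_(n+1))_n are both close in probability
   to the same D_N, while their difference telescopes to
   (g_(s_N) - g_(s_0)) / N; hence P(|g_(s_N)| > N) -> 0, a contradiction. *)

Lemma cvge0_lt (R : realFieldType) {I : Type} {F : set_system I} {FF : Filter F}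
    (u : I -> \bar R) :
  u @ F --> 0%E -> forall e : R, 0 < e -> \forall i \near F, (u i < e%:E)%E.
Proof.
move=> u0 e e0.
have : open_nbhs (0%E : \bar R) `]-oo, e%:E[.
  by split; [exact: lray_open | rewrite /= in_itv /= lte_fin].
move=> /open_nbhs_nbhs /u0 u_small.
near=> i.
have : u i \in `]-oo, e%:E[ by near: i.
by rewrite in_itv.
Unshelve. all: by end_near.
Qed.

Lemma norm_le_of_close_averages (R : realFieldType) (N : nat) (a b u v m c : R) :
  b - a = u - v -> `|N%:R^-1 * a - c| < 1/4 -> `|N%:R^-1 * b - c| < 1/4 ->
  `|v| <= m -> 2 * m < N%:R -> `|u| <= N%:R.
Proof.
move=> tel ha hb hv hm.
have N0 : 0 < N%:R :> R by apply: le_lt_trans hm; rewrite mulr_ge0 // (le_trans _ hv).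
have hba : `|b - a| < N%:R / 2.
  have : `|N%:R^-1 * b - N%:R^-1 * a| < 1/2.
    rewrite (_ : _ - _ = (N%:R^-1 * b - c) - (N%:R^-1 * a - c)); last by ring.
    apply: le_lt_trans (ler_normB _ _) _.
    by rewrite [1/2 as X in _ < X](_ : _ = 1/4 + 1/4); [exact: ltrD | field].
  rewrite -mulrBr normrM ger0_norm ?invr_ge0 ?ltW // ltr_pdivrMl //.
  by rewrite mul1r.
have : `|u| <= `|u - v| + `|v| by rewrite -{1}(subrK v u) ler_normD.
rewrite -tel; lra.
Qed.

Section measurable_norm.
Context d (T : measurableType d) (R : realType).

Lemma tail_measurable_measurable_fun (f : nat -> T -> R) (D : T -> R) :
  (forall n, measurable_fun setT (f n)) -> tail_measurable f D ->
  measurable_fun setT D.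
Proof.
move=> mf mD _ B mB; rewrite setTI.
apply: (smallest_sub (@sigma_algebra_measurable _ T) _ (mD B mB 0%N)).
by move=> _ [j [_ [C [mC ->]]]]; rewrite -(setTI (_ @^-1` _)); exact: mf.
Qed.

Lemma measurable_norm_gt (h : T -> R) (a : R) : measurable_fun setT h ->
  measurable [set x | a < `|h x|].
Proof.
move=> mh; have := measurableT_comp (@normr_measurable R setT) mh measurableT
  (measurable_itv `]a, +oo[).
by rewrite setTI; congr measurable; apply/seteqP; split=> x; rewrite /= in_itv /= andbT.
Qed.

Lemma measurable_norm_ge (h : T -> R) (a : R) : measurable_fun setT h ->
  measurable [set x | a <= `|h x|].
Proof.
move=> mh; have := measurableT_comp (@normr_measurable R setT) mh measurableT
  (measurable_itv `[a, +oo[).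
by rewrite setTI; congr measurable; apply/seteqP; split=> x; rewrite /= in_itv /= andbT.
Qed.

End measurable_norm.

Section bounded_in_probability.
Context d (T : measurableType d) (R : realType) (P : probability T R).

Lemma le_prob_norm_gt (h : T -> R) (a b : R) : measurable_fun setT h -> a <= b ->
  (P [set x | (b < `|h x|)%R] <= P [set x | (a < `|h x|)%R])%E.
Proof.
move=> mh ab; apply: le_measure; rewrite ?inE; try exact: measurable_norm_gt.
by move=> x /=; exact: le_lt_trans.
Qed.

Lemma prob_norm_gt_cvg0 (h : T -> R) : measurable_fun setT h ->
  (fun m : nat => P [set x | m%:R < `|h x|]) @ \oo --> 0%E.
Proof.
move=> mh; have <- : P (\bigcap_m [set x | m%:R < `|h x|]) = 0%E.
  suff -> : \bigcap_m [set x | m%:R < `|h x|] = set0 by exact: measure0.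
  apply/seteqP; split=> // x /= hx.
  have := hx (Num.bound `|h x|) I; rewrite /= ltNge.
  by move/negP; apply; exact/ltW/archi_boundP.
apply: nonincreasing_cvg_mu => //.
- by rewrite (le_lt_trans (probability_le1 _ _)) ?ltry //; exact: measurable_norm_gt.
- by move=> m; exact: measurable_norm_gt.
- by apply: bigcapT_measurable => m; exact: measurable_norm_gt.
- by move=> m n mn; apply/subsetPset => x /=; apply: le_lt_trans; rewrite ler_nat.
Qed.

Definition bounded_in_probability (g : nat -> T -> R) : Prop :=
  forall e : R, 0 < e -> exists M : R, forall n, (P [set x | (M < `|g n x|)%R] <= e%:E)%E.

Lemma bounded_in_probability_sup_cvg0 (g : nat -> T -> R) :
  (forall n, measurable_fun setT (g n)) -> bounded_in_probability g ->
  (fun M : R => ereal_sup (range (fun n => P [set x | M < `|g n x|]))) @ +oo --> 0%E.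
Proof.
move=> mg bdd; set S := fun M : R => ereal_sup _.
have S_ninc : nonincreasing_fun S.
  move=> M M' MM'; apply/ereal_supP => _ [n _ <-].
  apply: le_trans (le_prob_norm_gt (mg n) MM') _.
  by apply: ereal_sup_ubound; exists n.
suff <- : ereal_inf (range S) = 0%E by exact: nonincreasing_cvge.
apply/eqP; rewrite eq_le; apply/andP; split.
- apply/lee_addgt0Pr => e e0; rewrite add0e.
  have [M HM] := bdd e e0; apply: le_trans (ereal_inf_lbound _) _; first by exists M.
  by apply/ereal_supP => _ [n _ <-]; exact: HM.
- apply/ereal_infP => _ [M _ <-]; apply: le_trans (ereal_sup_ubound _); last by exists 0%N.
  exact: measure_ge0.
Qed.

End bounded_in_probability.

Section escaping_subsequence.
Context d (T : measurableType d) (R : realType) (P : probability T R).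
Variables (g : nat -> T -> R) (e : R).
Hypotheses (mg : forall n, measurable_fun setT (g n)) (e0 : 0 < e).
Hypothesis unbounded : forall M : R, exists n, (e%:E < P [set x | (M < `|g n x|)%R])%E.

Lemma unbounded_beyond (n0 : nat) (M : R) :
  exists n, (n0 <= n)%N /\ (e%:E < P [set x | (M < `|g n x|)%R])%E.
Proof.
elim: n0 M => [|n0 IH] M; first by have [n big] := unbounded M; exists n.
have [m _ small] := cvge0_lt (prob_norm_gt_cvg0 P (mg n0)) e0.
have {}small := ltW (small m (leqnn m)).
have [n [n0n big]] := IH (Num.max M m%:R).
exists n; split; last by apply: lt_le_trans big (le_prob_norm_gt _ (mg n) _); rewrite le_max lexx.
rewrite ltn_neqAle n0n andbT; apply/eqP => n0E; move: big; rewrite -n0E.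
have m_le_max : m%:R <= Num.max M m%:R by rewrite le_max lexx orbT.
have := le_trans (le_prob_norm_gt P (mg n0) m_le_max) small.
by rewrite leNgt => /negP.
Qed.

Lemma escaping_subsequence : exists s, strict_incr s /\
  forall N, (e%:E < P [set x | (N%:R < `|g (s N) x|)%R])%E.
Proof.
have /choice [c c_spec] : forall mn : nat * nat, exists n, (mn.2 <= n)%N /\
    (e%:E < P [set x | ((mn.1)%:R < `|g n x|)%R])%E.
  by move=> [m n0]; exact: unbounded_beyond.
pose s := fix s N := if N is N'.+1 then c (N, (s N').+1) else c (0, 0)%N.
exists s; split; first by move=> N; exact: (c_spec (N.+1, (s N).+1)).1.
by case=> [|N]; [exact: (c_spec (0, 0)%N).2 | exact: (c_spec (N.+1, (s N).+1)).2].
Qed.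

End escaping_subsequence.

Definition average (R : fieldType) (T : Type) (g : nat -> T -> R) (N : nat) (x : T) : R :=
  N%:R^-1 * \sum_(n < N) g n x.

Section averages_along_subsequences.
Context d (T : measurableType d) (R : realType) (P : probability T R).
Variables (g D : nat -> T -> R).
Hypotheses (mg : forall n, measurable_fun setT (g n))
  (mD : forall N, measurable_fun setT (D N)).
Hypothesis averages_close : forall s, strict_incr s -> forall eps : R, 0 < eps ->
  (fun N => P [set x | eps <= `|average (g \o s) N x - D N x|]) @ \oo --> 0%E.

Let measurable_average_sub s N :
  measurable_fun setT (fun x => average (g \o s) N x - D N x).
Proof.
apply: measurable_funB => //; apply: measurable_funM => //.
by apply: measurable_sum => n; exact: mg.
Qed.

Lemma prob_norm_gt_index_le (s : nat -> nat) (m N : nat) : (m.*2 < N)%N ->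
  (P [set x | (N%:R < `|g (s N) x|)%R] <=
     P [set x | (1/4 <= `|average (g \o s) N x - D N x|)%R]
   + P [set x | (1/4 <= `|average (g \o (s \o succn)) N x - D N x|)%R]
   + P [set x | (m%:R < `|g (s 0%N) x|)%R])%E.
Proof.
move=> mN.
set A := [set x | _ <= `|average (g \o s) N x - _|].
set B := [set x | _ <= `|average (g \o (s \o succn)) N x - _|].
set C := [set x | _ < `|g (s 0%N) x|].
have mA : measurable A by exact: measurable_norm_ge.
have mB : measurable B by exact: measurable_norm_ge.
have mC : measurable C by exact: measurable_norm_gt.
have cover : [set x | (N%:R < `|g (s N) x|)%R] `<=` A `|` B `|` C.
  move=> x /= gsN; apply: contrapT => /not_orP[/not_orP[/negP notA /negP notB] /negP notC].
  move: gsN; apply/negP; rewrite -leNgt.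
  apply: (@norm_le_of_close_averages _ N (\sum_(n < N) g (s n) x)
    (\sum_(n < N) g (s n.+1) x) _ (g (s 0%N) x) m%:R (D N x)).
  - rewrite -sumrB -(big_mkord xpredT (fun n => g (s n.+1) x - g (s n) x)).
    by rewrite telescope_sumr.
  - by rewrite ltNge.
  - by rewrite ltNge.
  - by rewrite leNgt.
  - by rewrite -natrM ltr_nat mul2n.
apply: le_trans (le_measure _ _ _ cover) _; rewrite ?inE.
- exact: measurable_norm_gt.
- by apply: measurableU => //; exact: measurableU.
apply: le_trans (measureU2 _ _ _) _ => //; first exact: measurableU.
by apply: leeD => //; exact: measureU2.
Qed.

Lemma prob_norm_gt_index_lt (s : nat -> nat) : strict_incr s ->
  forall e : R, 0 < e ->
  \forall N \near \oo, (P [set x | (N%:R < `|g (s N) x|)%R] < e%:E)%E.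
Proof.
move=> s_incr e e0.
have e3 : 0 < e / 3 by rewrite divr_gt0.
have q0 : 0 < 1/4 :> R by rewrite divr_gt0.
have shift_incr : strict_incr (s \o succn) by move=> N; exact: s_incr.
have [N1 _ smallA] := cvge0_lt (averages_close s_incr q0) e3.
have [N2 _ smallB] := cvge0_lt (averages_close shift_incr q0) e3.
have [m _ smallC] := cvge0_lt (prob_norm_gt_cvg0 P (mg (s 0%N))) e3.
exists (N1 + N2 + m.*2).+1 => // N /= hN.
apply: le_lt_trans (prob_norm_gt_index_le s (m := m) _) _; first lia.
rewrite [e](_ : _ = e / 3 + e / 3 + e / 3); last by field.
rewrite !EFinD; apply: lteD; [apply: lteD|].
- by apply: smallA => /=; lia.
- by apply: smallB => /=; lia.
- exact: smallC m (leqnn m).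
Qed.

Lemma bounded_in_probability_of_close_averages : bounded_in_probability P g.
Proof.
apply: contrapT => /existsNP[e /not_implyP[e0 /forallNP unbounded]].
have {}unbounded M : exists n, (e%:E < P [set x | (M < `|g n x|)%R])%E.
  by have /existsNP[n /negP] := unbounded M; rewrite -ltNge; exists n.
have [s [s_incr s_escapes]] := escaping_subsequence mg e0 unbounded.
have [N0 _ small] := prob_norm_gt_index_lt s_incr e0.
have := lt_trans (s_escapes N0) (small N0 (leqnn N0)).
by rewrite ltxx.
Qed.

End averages_along_subsequences.

Theorem lemma5p1 (d : measure_display) (T : measurableType d) (R : realType)
    (P : probability T R) (f : nat -> T -> R)
    (hf : forall n, measurable_fun setT (f n))
    (k : nat -> nat) (hk : strict_incr k)
    (D : nat -> T -> R) (hD : forall N, tail_measurable f (D N))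
    (hconv : forall s : nat -> nat, strict_incr s ->
       forall eps : R, 0 < eps ->
       (fun N : nat => P [set x | eps <= `| (N%:R)^-1 * \sum_(n < N) f (k (s n)) x - D N x| ])
         @ \oo --> 0%E) :
  exists s : nat -> nat, strict_incr s /\
    (fun M : R => ereal_sup (range (fun n : nat => P [set x | M < `| f (k (s n)) x | ])))
      @ +oo --> 0%E.
Proof.
pose g n := f (k n).
have mg n : measurable_fun setT (g n) by exact: hf.
have mD N : measurable_fun setT (D N) by exact: tail_measurable_measurable_fun (hD N).
exists id; split; first by move=> n; exact: ltnSn.
apply: bounded_in_probability_sup_cvg0 => //.
exact: bounded_in_probability_of_close_averages mg mD hconv.
Qed.
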